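(* For integers $i\ge0$, $j\ge0$ and real $k_1,k_2$, $$\sum_{r=j}^{i}\frac{1}{r!}\,b_{i,r,k_1}\,c_{r,j,k_2}=\binom{i}{j}(k_1-k_2)^{i-j}.$$
   Context: For integers $i\ge0$, $j\ge0$ and real $k$, $b_{i,j,k}=\sum_{r=0}^{j}\binom{j}{r}(-1)^{j-r}(r+k)^i$, with the convention $0^0=1$. The (signed) Stirling numbers of the first kind $s_{i,j}$ ($i,j\ge0$) are defined by $s_{0,0}=1$, $s_{0,j}=0$ for $j>0$, $s_{i,0}=0$ for $i>0$, and $s_{i+1,j}=s_{i,j-1}-i\,s_{i,j}$ for $i\ge0$, $j>0$. For integers $i,j\ge0$ and real $k$, $c_{i,j,k}=\sum_{r=j}^{i}\binom{r}{j}(-k)^{r-j}s_{i,r}$ (with $0^0=1$). An empty sum (when $i<j$) equals $0$, as does $\binom{i}{j}$ for $i<j$. *)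

From mathcomp Require Import all_boot all_order all_algebra.
Set Implicit Arguments. Unset Strict Implicit. Unset Printing Implicit Defensive.
Import Order.TTheory GRing.Theory Num.Theory.
Local Open Scope ring_scope.

Fixpoint stirling1 (i j : nat) : int :=
  match i, j with
  | 0%N, 0%N => 1
  | 0%N, _.+1 => 0
  | _.+1, 0%N => 0
  | i'.+1, j'.+1 => stirling1 i' j' - (i'%:Z) * stirling1 i' j'.+1
  end.

(* b_{i,j,k} = sum_{r=0}^{j} C(j,r) (-1)^{j-r} (r+k)^i, with 0^0 = 1
   (x ^+ 0 = 1 in MathComp). *)
Definition bcoef {R : realFieldType} (i j : nat) (k : R) : R :=
  \sum_(0 <= r < j.+1) ('C(j, r))%:R * (-1) ^+ (j - r) * (r%:R + k) ^+ i.

Definition ccoef {R : realFieldType} (i j : nat) (k : R) : R :=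
  \sum_(j <= r < i.+1) ('C(r, j))%:R * (- k) ^+ (r - j) * (stirling1 i r)%:~R.

(* Newton's forward interpolation formula expands a polynomial p of degree at
   most i as  p = sum_r (Delta^r p)(k2) / r! * (X - k2)(X - k2 - 1)...(X - k2 - r + 1).
   For p = (X + k1 - k2)^i the values at the nodes k2 + t are (t + k1)^i, so the
   forward differences are exactly b_{i,r,k1}; and since the Stirling numbers of
   the first kind are the coefficients of the falling factorial, the coefficient
   of X^j in the r-th shifted falling factorial is c_{r,j,k2}.  Comparing
   coefficients of X^j with the binomial expansion of p gives the identity. *)

From mathcomp Require Import all_boot all_order all_algebra.
From mathcomp Require Import ring.
Set Implicit Arguments. Unset Strict Implicit. Unset Printing Implicit Defensive.
Import Order.TTheory GRing.Theory Num.Theory.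
Local Open Scope ring_scope.

Lemma sumr_nat_vanishing_prefix (V : nmodType) (F : nat -> V) j n :
  (forall m, (m < j)%N -> F m = 0) ->
  \sum_(0 <= m < n) F m = \sum_(j <= m < n) F m.
Proof.
move=> F_vanish; rewrite [RHS](@big_nat_widenl _ _ _ j 0) // [RHS]big_mkcond /=.
by apply: eq_bigr => m _; case: leqP => // /F_vanish.
Qed.

Section ForwardDifference.
Variable R : comPzRingType.

Definition forward_diff (f : nat -> R) (r : nat) : R :=
  \sum_(0 <= t < r.+1) 'C(r, t)%:R * (-1) ^+ (r - t) * f t.

Lemma forward_diff0 f : forward_diff f 0 = f 0.
Proof. by rewrite /forward_diff big_nat1 bin0 expr0 !mul1r. Qed.

Lemma forward_diffS f r :
  forward_diff f r.+1 = forward_diff (fun t => f t.+1) r - forward_diff f r.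
Proof.
have sign_shift t :
    'C(r, t.+1)%:R * (-1) ^+ (r - t) = - ('C(r, t.+1)%:R * (-1) ^+ (r - t.+1)) :> R.
  case: (ltnP t r) => [lt_tr | le_rt]; last by rewrite bin_small ?ltnS // !mul0r oppr0.
  by rewrite -(subnSK lt_tr) exprS mulN1r mulrN.
have diff_tail : \sum_(0 <= t < r.+1) 'C(r, t.+1)%:R * (-1) ^+ (r - t.+1) * f t.+1
    = forward_diff f r - (-1) ^+ r * f 0.
  rewrite /forward_diff [in RHS]big_nat_recl // bin0 subn0 mul1r.
  by rewrite big_nat_recr //= bin_small // !mul0r addr0 addrC addKr.
rewrite [forward_diff f r.+1]/forward_diff big_nat_recl // bin0 subn0 mul1r.
under eq_bigr => t _ do rewrite subSS binS natrD !mulrDl.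
rewrite big_split /=.
under [X in _ + (X + _)]eq_bigr => t _ do rewrite sign_shift mulNr.
rewrite sumrN diff_tail -/(forward_diff (fun t => f t.+1) r) exprS.
ring.
Qed.

Lemma sum_bin_forward_diff f n :
  \sum_(0 <= r < n.+1) 'C(n, r)%:R * forward_diff f r = f n.
Proof.
elim: n f => [|n IHn] f; first by rewrite big_nat1 forward_diff0 mul1r.
have widen : \sum_(0 <= r < n.+2) 'C(n, r)%:R * forward_diff f r
    = \sum_(0 <= r < n.+1) 'C(n, r)%:R * forward_diff f r.
  by rewrite big_nat_recr //= bin_small // mul0r addr0.
rewrite big_nat_recl // bin0 mul1r.
under eq_bigr => r _ do rewrite binS natrD mulrDl.
rewrite big_split /= addrA.
move: widen; rewrite [in X in X = _ -> _]big_nat_recl // bin0 mul1r => ->.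
rewrite -big_split /=.
under eq_bigr => r _ do rewrite -mulrDr forward_diffS addrC subrK.
exact: IHn.
Qed.

End ForwardDifference.

Lemma prod_natr_sub_ffact (R : pzRingType) (n r : nat) :
  \prod_(0 <= t < r) (n%:R - t%:R : R) = (n ^_ r)%:R.
Proof.
elim: r => [|r IHr]; first by rewrite big_geq // ffactn0.
rewrite big_nat_recr //= IHr ffactnSr natrM.
case: (leqP r n) => [le_rn | lt_nr]; first by rewrite natrB.
by rewrite ffact_small // !mul0r.
Qed.

Section FallingFactorialPolynomial.
Variable R : comNzRingType.

Definition ffact_poly (r : nat) : {poly R} := \prod_(0 <= t < r) ('X - t%:R%:P).

Lemma size_ffact_poly r : size (ffact_poly r) = r.+1.
Proof. by rewrite /ffact_poly size_prod_XsubC size_iota subn0. Qed.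

Lemma horner_ffact_poly r n : (ffact_poly r).[n%:R] = (n ^_ r)%:R.
Proof.
rewrite horner_prod -prod_natr_sub_ffact.
by apply: eq_bigr => t _; rewrite hornerXsubC.
Qed.

Lemma coef_ffact_poly r m : (ffact_poly r)`_m = (stirling1 r m)%:~R.
Proof.
elim: r m => [|r IHr] m.
  by rewrite /ffact_poly big_geq // coef1; case: m.
rewrite /ffact_poly big_nat_recr //= -/(ffact_poly r) mulrBr coefB coefMX coefMC.
case: m => [|m] /=; rewrite !IHr.
  by case: r {IHr} => [|r]; rewrite /= ?mulr0 ?mul0r subr0.
by rewrite rmorphB rmorphM /= mulrC.
Qed.

Lemma coef_XaddC_exp (c : R) n j :
  (('X + c%:P) ^+ n)`_j = 'C(n, j)%:R * c ^+ (n - j).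
Proof.
have -> : ('X + c%:P) ^+ n = \poly_(i < n.+1) ('C(n, i)%:R * c ^+ (n - i)).
  rewrite addrC exprDn poly_def; apply: eq_bigr => i _.
  by rewrite -rmorphXn mul_polyC scalerMnl -mulr_natl.
rewrite coef_poly; case: ltnP => // lt_nj.
by rewrite bin_small ?mul0r.
Qed.

Lemma coef_comp_ffact_poly_XsubC r j (k : R) :
  (ffact_poly r \Po ('X - k%:P))`_j
  = \sum_(j <= m < r.+1) 'C(m, j)%:R * (- k) ^+ (m - j) * (stirling1 r m)%:~R.
Proof.
rewrite coef_comp_poly size_ffact_poly -(sumr_nat_vanishing_prefix (j := j)) => [|m lt_mj].
  rewrite big_mkord; apply: eq_bigr => m _.
  by rewrite coef_ffact_poly -polyCN coef_XaddC_exp mulrC.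
by rewrite bin_small ?mul0r.
Qed.

End FallingFactorialPolynomial.

Lemma newton_forward_interpolation (F : numFieldType) (p : {poly F}) (k : F) n :
  (size p <= n.+1)%N ->
  p = \sum_(0 <= r < n.+1) ((r`!%:R)^-1 * forward_diff (fun t => p.[k + t%:R]) r)
                             *: (ffact_poly F r \Po ('X - k%:P)).
Proof.
set q := \sum_(0 <= r < n.+1) _; move=> size_p.
have size_q : (size q <= n.+1)%N.
  rewrite /q big_nat_cond; apply: (big_ind (fun s : {poly F} => size s <= n.+1)%N).
  - by rewrite size_poly0.
  - by move=> s1 s2 le1 le2; apply: leq_trans (size_polyD _ _) _; rewrite geq_max le1 le2.
  move=> r /andP[/andP[_ lt_rn] _]; apply: leq_trans (size_scale_leq _ _) _.
  apply: leq_trans (size_comp_poly_leq _ _) _.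
  by rewrite size_ffact_poly size_XsubC muln1.
have q_nodes m : (m <= n)%N -> q.[k + m%:R] = p.[k + m%:R].
  move=> le_mn; rewrite /q horner_sum.
  under eq_bigr => r _ do
    rewrite hornerZ horner_comp hornerXsubC [k + _]addrC addrK horner_ffact_poly.
  have fact_neq0 r : (r`!%:R : F) != 0 by rewrite pnatr_eq0 -lt0n fact_gt0.
  under eq_bigr => r _ do
    rewrite -bin_ffact natrM mulrC -mulrA mulVKf ?fact_neq0 //.
  rewrite (big_cat_nat _ (n := m.+1)) //= [X in _ + X]big1_seq ?addr0.
    exact: sum_bin_forward_diff.
  by move=> r /andP[_]; rewrite mem_index_iota => /andP[lt_mr _]; rewrite bin_small ?mul0r.
apply/eqP; rewrite -subr_eq0; apply/eqP.
apply: (@roots_geq_poly_eq0 _ _ [seq k + m%:R | m <- iota 0 n.+1]).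
- apply/allP => x /mapP[m]; rewrite mem_iota => /andP[_ lt_mn] ->.
  by rewrite /root hornerD hornerN q_nodes ?subrr.
- by rewrite map_inj_uniq ?iota_uniq // => m1 m2 /addrI /eqP; rewrite eqr_nat => /eqP.
rewrite size_map size_iota; apply: leq_trans (size_polyD _ _) _.
by rewrite size_polyN geq_max size_p size_q.
Qed.

Theorem mainTheorem17 (R : realFieldType) (i j : nat) (k1 k2 : R) :
  \sum_(j <= r < i.+1) (r`!%:R)^-1 * bcoef i r k1 * ccoef r j k2
  = ('C(i, j))%:R * (k1 - k2) ^+ (i - j).
Proof.
rewrite -coef_XaddC_exp; set p := ('X + (k1 - k2)%:P) ^+ i.
have size_p : (size p <= i.+1)%N by rewrite /p -opprB polyCN size_exp_XsubC.
have p_nodes t : p.[k2 + t%:R] = (t%:R + k1) ^+ i.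
  by rewrite /p horner_exp hornerD hornerX hornerC; congr (_ ^+ _); ring.
rewrite {1}(newton_forward_interpolation k2 size_p) coef_sum.
rewrite (sumr_nat_vanishing_prefix (j := j)) => [|r lt_rj]; last first.
  by rewrite coefZ coef_comp_ffact_poly_XsubC big_geq ?mulr0.
apply: eq_bigr => r _; rewrite coefZ coef_comp_ffact_poly_XsubC /forward_diff.
by under [in RHS]eq_bigr => t _ do rewrite p_nodes.
Qed.
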